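(* Let $t\in\mathbb{N}$. There exists $n_0(t)$ such that for all $n\ge n_0(t)$, if $\mathcal{F},\mathcal{G}\subseteq\mathcal{M}_{2n-1}$ are $t$-cross-intersecting, then $|\mathcal{F}|\cdot|\mathcal{G}|\le\big((2(n-t)-1)!!\big)^2$.
   Context: $\mathcal{M}_{2n-1}$ is the set of near-perfect matchings of the complete graph $K_{2n-1}$ (matchings with $n-1$ edges). Families $\mathcal{F},\mathcal{G}$ are $t$-cross-intersecting if $|m\cap m'|\ge t$ for all $m\in\mathcal{F}$, $m'\in\mathcal{G}$. $(2k-1)!!=1\cdot3\cdots(2k-1)$. *)

From mathcomp Require Import all_boot.
Set Implicit Arguments. Unset Strict Implicit. Unset Printing Implicit Defensive.

(* Complete graph K_m on vertex set 'I_m; an edge is a 2-subset of vertices. *)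
Definition is_edge (m : nat) (e : {set 'I_m}) : bool := #|e| == 2.

Definition is_matching (m : nat) (M : {set {set 'I_m}}) : bool :=
  [forall e in M, is_edge e] &&
  [forall e in M, forall f in M, (e != f) ==> [disjoint e & f]].

(* M_{2n-1}: near-perfect matchings of K_{2n-1}, i.e. matchings with n-1 edges. *)
Definition near_perfect_matchings (n : nat) : {set {set {set 'I_(2 * n - 1)}}} :=
  [set M | is_matching M && (#|M| == n - 1)].

Definition t_cross_intersecting (m t : nat) (F G : {set {set {set 'I_m}}}) : Prop :=
  forall M M', M \in F -> M' \in G -> t <= #|M :&: M'|.

(* dfact k = (2k-1)!! = 1 * 3 * ... * (2k-1); dfact 0 = 1 = (-1)!!. *)
Definition dfact (k : nat) : nat := \prod_(i < k) (2 * i + 1).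

(* The members of M_{2n-1} containing a given set S of edges number at most
   (2(n-|S|)-1)!!.  If c|F| < (2(n-t)-1)!! with c = 10 n^(t+1) >= C(n-1,t), covering G by the
   stars of the t-subsets of one member of F already gives the bound.
   Otherwise both families are large, and we use kernels of size q = O(t log n): among the sets
   S of at most q edges, the kernel of a family A maximizes |A(S)| n^|S|, where A(S) is the star
   of S.  For a large A the kernel has at most q - t edges and its star is spread (adding u more
   edges shrinks it by a factor n^u), so a matching meeting each member of the star in t edges,
   having fewer than n^u sets of u extra edges to offer, must contain t edges of the kernel.
   Thus every member of G contains a t-subset T of the kernel of F.  Call T good when all but
   (2(n-t)-1)!!/c members of F contain T.  For a bad T, the kernel of the members of F avoiding T
   again meets every member of G in t edges but does not contain T, so the members of G through
   T contain a further edge of a set of at most q edges and are few.  Comparing the cases of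
   several, one, or no good T yields the bound. *)

From mathcomp Require Import all_boot zify.
From mathcomp Require Import ssralg ring.
Set Implicit Arguments. Unset Strict Implicit. Unset Printing Implicit Defensive.

Lemma dfactS k : dfact k.+1 = dfact k * (2 * k + 1).
Proof. by rewrite /dfact big_ord_recr. Qed.

Lemma dfact_gt0 k : 0 < dfact k.
Proof. by rewrite /dfact prodn_gt0 // => i; rewrite addn1. Qed.

Lemma leq_dfact k l : k <= l -> dfact k <= dfact l.
Proof.
move=> /subnKC <-; elim: (l - k) => [|m IH]; first by rewrite addn0.
by rewrite addnS dfactS (leq_trans IH) // leq_pmulr // addn1.
Qed.

Lemma leq_dfactD k m : dfact k * (2 * k + 1) ^ m <= dfact (k + m).
Proof.
elim: m => [|m IH]; first by rewrite expn0 muln1 addn0.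
rewrite (addnS k m) dfactS expnS mulnCA mulnC leq_mul //.
by rewrite leq_add2r leq_mul2l leq_addr orbT.
Qed.

Lemma dfact_subnS n t : t < n -> dfact (n - t) = dfact (n - t.+1) * (2 * (n - t.+1)).+1.
Proof. by move=> tn; rewrite -[(2 * _).+1]addn1 -dfactS; congr dfact; lia. Qed.

Lemma leq_exp2rW m n e : m <= n -> m ^ e <= n ^ e.
Proof. by move=> mn; elim: e => // e IH; rewrite !expnS leq_mul. Qed.

Lemma bin_leq_exp m k : 'C(m, k) <= m ^ k.
Proof.
apply: (@leq_trans (m ^_ k)); first by rewrite -bin_ffact leq_pmulr ?fact_gt0.
rewrite ffact_prod -[k in m ^ k]card_ord -prod_nat_const.
by apply: leq_prod => i _; apply: leq_subr.
Qed.

Lemma leq_mul_scaled c x y a b K :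
  0 < c -> c * x <= a -> y <= b -> a * b <= c * K -> x * y <= K.
Proof.
move=> c_gt0 hx hy hK; rewrite -(leq_pmul2l c_gt0) mulnA.
exact: leq_trans (leq_mul hx hy) hK.
Qed.

Lemma card_bigcup_leq (I T : finType) (P : pred I) (F : I -> {set T}) :
  #|\bigcup_(i | P i) F i| <= \sum_(i | P i) #|F i|.
Proof.
elim/big_rec2: _ => [|i x y _ Hxy]; first by rewrite cards0.
by rewrite (leq_trans (leq_card_setU _ _)) ?leq_add2l.
Qed.

Lemma exists_subset_card (T : finType) (B : {set T}) j :
  j <= #|B| -> exists2 U : {set T}, U \subset B & #|U| = j.
Proof.
move=> jB; have : 0 < #|[set U : {set T} | U \subset B & #|U| == j]|.
  by rewrite cards_draws bin_gt0.
by case/card_gt0P => U; rewrite inE => /andP[UB /eqP]; exists U.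
Qed.

Lemma exists_setI_notin (T : finType) (A B C : {set T}) :
  ~~ (A \subset C) -> #|A| <= #|B :&: C| -> exists2 x, x \in B :&: C & x \notin A.
Proof.
move=> AC AB; apply/subsetPn; apply: contraTN AB => BCA; rewrite -ltnNge.
apply: leq_ltn_trans (proper_card (properIl AC)); apply: subset_leq_card.
by rewrite subsetI BCA subsetIr.
Qed.

Lemma cards2_mem (T : finType) (e : {set T}) v :
  #|e| = 2 -> v \in e -> exists2 w, w != v & e = [set v; w].
Proof.
move/eqP/cards2P=> [x [y [xy ->]]]; rewrite !inE => /orP[] /eqP ->.
  by exists y; rewrite // eq_sym.
by exists x; rewrite // setUC.
Qed.

Section MatchingsOn.
Variable V : finType.
Implicit Types (W : {set V}) (M S : {set {set V}}).

Definition matching_on W k M : bool :=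
  [&& [forall e in M, (#|e| == 2) && (e \subset W)], trivIset M & #|M| == k].

Lemma card_cover_matching_on W k M : matching_on W k M -> #|cover M| = 2 * k.
Proof.
case/and3P=> /forall_inP He tM /eqP <-; rewrite -(eqP tM).
by rewrite (eq_bigr (fun _ => 2)) ?sum_nat_const 1?mulnC // => e /He /andP[/eqP].
Qed.

Lemma cover_matching_on W k M : matching_on W k M -> cover M \subset W.
Proof. by case/and3P=> /forall_inP He _ _; apply/bigcupsP => e /He /andP[]. Qed.

Lemma matching_onS W k M S : matching_on W k M -> S \subset M -> matching_on W #|S| S.
Proof.
case/and3P=> /forall_inP He tM _ SM; apply/and3P; split=> //; last exact: trivIsetS tM.
by apply/forall_inP => e /(subsetP SM) /He.
Qed.

Lemma matching_onD W k M S :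
  matching_on W k M -> S \subset M -> matching_on (W :\: cover S) (k - #|S|) (M :\: S).
Proof.
case/and3P=> /forall_inP He tM /eqP <- SM; apply/and3P; split.
- apply/forall_inP => e /setDP[eM eS]; have /andP[-> eW] := He e eM.
  apply/subsetP => x xe; rewrite inE (subsetP eW) // andbT.
  apply/bigcupP => -[f fS xf]; have ef : e != f by apply: contraNneq eS => ->.
  by rewrite (disjointFr (trivIsetP tM e f eM (subsetP SM f fS) ef) xe) in xf.
- exact: trivIsetS (subsetDl _ _) tM.
- by rewrite cardsDS.
Qed.

Lemma card_matchings_on_sup W k S :
  #|[set M | matching_on W k M & S \subset M]|
    <= #|[set M | matching_on (W :\: cover S) (k - #|S|) M]|.
Proof.
have inj : {in [set M | matching_on W k M & S \subset M] &, injective (fun M => M :\: S)}.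
  move=> M1 M2; rewrite !inE => /andP[_ SM1] /andP[_ SM2] E; apply/setP => e.
  case eS: (e \in S); first by rewrite (subsetP SM1) ?(subsetP SM2).
  by move/setP/(_ e): E; rewrite !inE eS.
rewrite -(card_in_imset inj); apply/subset_leq_card/subsetP => M' /imsetP[M].
by rewrite inE => /andP[mM SM] ->; rewrite inE matching_onD.
Qed.

Lemma card_perfect_matchings_on W k :
  #|W| = 2 * k -> #|[set M | matching_on W k M]| <= dfact k.
Proof.
elim: k W => [|k IH] W cW.
  apply: leq_trans (subset_leq_card (_ : _ \subset [set set0])) _; last by rewrite cards1 dfact_gt0.
  by apply/subsetP => M; rewrite !inE => /and3P[_ _]; rewrite cards_eq0.
have [v vW] : exists v, v \in W by apply/card_gt0P; rewrite cW muln_gt0.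
pose through w := [set M | matching_on W k.+1 M & [set [set v; w]] \subset M].
have cover_through :
    [set M | matching_on W k.+1 M] \subset \bigcup_(w in W :\ v) through w.
  apply/subsetP => M; rewrite inE => mM.
  have : v \in cover M.
    suff -> : cover M = W by [].
    by apply/eqP; rewrite eqEcard (cover_matching_on mM) (card_cover_matching_on mM) cW leqnn.
  case/bigcupP => e eM ve; case/and3P: (mM) => /forall_inP/(_ e eM)/andP[/eqP ce eW] _ _.
  have [w wv Ee] := cards2_mem ce ve.
  apply/bigcupP; exists w; last by rewrite inE mM sub1set -Ee.
  by rewrite !inE wv (subsetP eW) // Ee !inE eqxx orbT.
apply: leq_trans (subset_leq_card cover_through) _.
apply: leq_trans (card_bigcup_leq _ _) _.
apply: (@leq_trans (\sum_(w in W :\ v) dfact k)).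
  apply: leq_sum => w; rewrite !inE => /andP[wv wW].
  apply: leq_trans (card_matchings_on_sup _ _ _) _; rewrite cover1 cards1 subSS subn0.
  apply: IH; rewrite cardsDS ?cards2 1?eq_sym ?wv; first by rewrite cW; lia.
  by apply/subsetP => x; rewrite !inE => /orP[] /eqP ->.
rewrite sum_nat_const dfactS mulnC leq_mul2l; apply/orP; right.
by move: (cardsD1 v W); rewrite vW cW; lia.
Qed.

Lemma card_near_perfect_matchings_on W k :
  #|W| = (2 * k).+1 -> #|[set M | matching_on W k M]| <= dfact k.+1.
Proof.
move=> cW.
have missing : [set M | matching_on W k M] \subset
               \bigcup_(u in W) [set M | matching_on (W :\ u) k M].
  apply/subsetP => M; rewrite inE => mM.
  have /subsetPn[u uW ucov] : ~~ (W \subset cover M).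
    by apply/negP => /subset_leq_card; rewrite cW (card_cover_matching_on mM) ltnn.
  apply/bigcupP; exists u; rewrite // inE.
  case/and3P: mM => /forall_inP He tM cM; apply/and3P; split=> //.
  apply/forall_inP => e eM; have /andP[-> eW] := He e eM.
  apply/subsetP => x xe; rewrite !inE (subsetP eW) // andbT.
  by apply: contraNneq ucov => <-; apply/bigcupP; exists e.
apply: leq_trans (subset_leq_card missing) _.
apply: leq_trans (card_bigcup_leq _ _) _.
apply: (@leq_trans (\sum_(u in W) dfact k)).
  apply: leq_sum => u uW; apply: card_perfect_matchings_on.
  by move: (cardsD1 u W); rewrite uW cW; lia.
by rewrite sum_nat_const cW dfactS mulnC addn1.
Qed.

End MatchingsOn.

Definition star (T : finType) (A : {set {set T}}) (S : {set T}) := [set M in A | S \subset M].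

Section Stars.
Variable T : finType.
Implicit Types (A B : {set {set T}}) (S U : {set T}).

Lemma starS A B S : A \subset B -> star A S \subset star B S.
Proof. by move=> AB; apply/subsetP => M; rewrite !inE => /andP[/(subsetP AB) -> ->]. Qed.

Lemma star0 A : star A set0 = A.
Proof. by apply/setP => M; rewrite !inE sub0set andbT. Qed.

Lemma star_star A S U : star (star A S) U = star A (S :|: U).
Proof. by apply/setP => M; rewrite !inE subUset andbA. Qed.

Lemma card_leq_sum_star A S j :
  (forall M, M \in A -> j <= #|M :&: S|) ->
  #|A| <= \sum_(X in [set X : {set T} | X \subset S & #|X| == j]) #|star A X|.
Proof.
move=> AS; apply: leq_trans (card_bigcup_leq _ _).
apply/subset_leq_card/subsetP => M MA.
have [U US cU] := exists_subset_card (AS M MA).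
apply/bigcupP; exists U; rewrite !inE ?cU ?eqxx ?andbT ?MA.
  exact: subset_trans US (subsetIr _ _).
exact: subset_trans US (subsetIl _ _).
Qed.

End Stars.

Lemma t_cross_intersectingC m t (F G : {set {set {set 'I_m}}}) :
  t_cross_intersecting t F G -> t_cross_intersecting t G F.
Proof. by move=> FG M' M M'G MF; rewrite setIC; apply: FG. Qed.

Section NearPerfectMatchings.
Variable n : nat.
Hypothesis n_gt0 : 0 < n.
Local Notation edge := {set 'I_(2 * n - 1)}.
Local Notation NP := (near_perfect_matchings n).
Implicit Types (A B F G : {set {set edge}}) (M S T U : {set edge}).

Lemma near_perfect_matching_on M : M \in NP -> matching_on setT (n - 1) M.
Proof.
rewrite inE => /andP[/andP[/forall_inP He /forall_inP Hd] cM].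
apply/and3P; split=> //; first by apply/forall_inP => e eM; rewrite subsetT andbT; apply: He.
apply/trivIsetP => e f eM fM ef.
by have /forall_inP/(_ f fM)/implyP/(_ ef) := Hd e eM.
Qed.

Lemma card_near_perfect M : M \in NP -> #|M| = n - 1.
Proof. by rewrite inE => /andP[_ /eqP]. Qed.

Lemma card_star_near_perfect S : #|star NP S| <= dfact (n - #|S|).
Proof.
have [->|[M0]] := set_0Vmem (star NP S); first by rewrite cards0.
rewrite inE => /andP[M0NP SM0]; have mM0 := near_perfect_matching_on M0NP.
have cS : #|S| <= n - 1 by rewrite -(card_near_perfect M0NP) subset_leq_card.
have cW : #|setT :\: cover S| = (2 * (n - 1 - #|S|)).+1.
  rewrite cardsDS ?subsetT // cardsT card_ord (card_cover_matching_on (matching_onS mM0 SM0)).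
  lia.
have -> : n - #|S| = (n - 1 - #|S|).+1 by lia.
apply: leq_trans (card_near_perfect_matchings_on cW).
apply: leq_trans (card_matchings_on_sup _ _ _).
apply/subset_leq_card/subsetP => M /setIdP[MNP SM].
by rewrite inE SM andbT near_perfect_matching_on.
Qed.

Lemma card_star_leq A S : A \subset NP -> #|star A S| <= dfact (n - #|S|).
Proof. by move=> AN; apply: leq_trans (card_star_near_perfect S); apply/subset_leq_card/starS. Qed.

Lemma card_cross_leq G S j :
  G \subset NP -> (forall M, M \in G -> j <= #|M :&: S|) ->
  #|G| <= 'C(#|S|, j) * dfact (n - j).
Proof.
move=> GN GS; apply: leq_trans (card_leq_sum_star GS) _.
rewrite -cards_draws -sum_nat_const; apply: leq_sum => U; rewrite inE => /andP[_ /eqP <-].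
exact: card_star_leq.
Qed.

Lemma card_star_avoid A T M :
  A \subset NP -> M \in NP -> ~~ (T \subset M) ->
  (forall M', M' \in star A T -> #|T| <= #|M' :&: M|) ->
  #|star A T| <= (n - 1) * dfact (n - #|T|.+1).
Proof.
move=> AN MN TM AM.
have cover_extra : star A T \subset \bigcup_(e in M :\: T) star A (e |: T).
  apply/subsetP => M' M'AT; have [e] := exists_setI_notin TM (AM M' M'AT).
  rewrite inE => /andP[eM' eM] eT; apply/bigcupP; exists e; first by rewrite inE eT.
  by move: M'AT; rewrite !inE subUset sub1set eM' => /andP[-> ->].
apply: leq_trans (subset_leq_card cover_extra) _; apply: leq_trans (card_bigcup_leq _ _) _.
apply: (@leq_trans (\sum_(e in M :\: T) dfact (n - #|T|.+1))).
  apply: leq_sum => e /setDP[_ eT].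
  by apply: leq_trans (card_star_leq _ AN) _; rewrite cardsU1 eT.
rewrite sum_nat_const leq_mul2r -(card_near_perfect MN) subset_leq_card ?subsetDl //.
by rewrite orbT.
Qed.

Definition spread_star t A S := forall U, [disjoint U & S] -> 0 < #|U| <= t ->
  #|star A (S :|: U)| * n ^ #|U| <= #|star A S|.

Lemma spread_star_meets t A S M' :
  M' \in NP -> spread_star t A S -> 0 < #|star A S| ->
  (forall M, M \in star A S -> t <= #|M :&: M'|) -> t <= #|M' :&: S|.
Proof.
move=> M'N spread starA starM'; rewrite leqNgt; apply/negP => lt_t.
set u := t - #|M' :&: S|.
have u_gt0 : 0 < u by rewrite subn_gt0.
have meet_out : forall M, M \in star A S -> u <= #|M :&: (M' :\: S)|.
  move=> M MS; have := starM' M MS; rewrite setIDA cardsD.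
  have : #|M :&: M' :&: S| <= #|M' :&: S|.
    by rewrite -setIA subset_leq_card ?subsetIr.
  rewrite /u; lia.
set D := [set X : {set edge} | X \subset M' :\: S & #|X| == u].
have spread_sum : \sum_(X in D) #|star (star A S) X| * n ^ u <= #|D| * #|star A S|.
  rewrite -sum_nat_const; apply: leq_sum => X; rewrite inE => /andP[XS /eqP cX].
  rewrite star_star -cX; apply: spread; last by rewrite cX u_gt0 leq_subr.
  by apply: disjointWl XS _; rewrite disjoint_subset; apply/subsetP => e /setDP[].
have cD : #|D| <= (n - 1) ^ u.
  rewrite cards_draws (leq_trans (bin_leq_exp _ _)) // leq_exp2rW //.
  by rewrite -(card_near_perfect M'N) subset_leq_card ?subsetDl.
have : #|star A S| * n ^ u <= (n - 1) ^ u * #|star A S|.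
  apply: leq_trans (leq_mul (card_leq_sum_star meet_out) (leqnn _)) _.
  by rewrite big_distrl /= (leq_trans spread_sum) // leq_mul2r cD orbT.
by rewrite mulnC leqNgt ltn_pmul2r // ltn_exp2r //; lia.
Qed.

Definition kernel q A := [arg max_(S > set0 | #|S| <= q) #|star A S| * n ^ #|S|].

Lemma card_kernel_leq q A : #|kernel q A| <= q.
Proof. by rewrite /kernel; case: arg_maxnP; rewrite ?cards0. Qed.

(* A set of s edges with q - t < s <= q weighs less than a family of size at least
   dfact (n - t) / c, so it cannot be the kernel of such a family. *)
Definition kernel_gap t q c :=
  forall s, q - t < s <= q -> c * (dfact (n - s) * n ^ s) < dfact (n - t).

Section Kernel.
Variables t q c : nat.
Hypotheses (t_le_q : t <= q) (gap : kernel_gap t q c).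

Lemma kernel_spec A :
  A \subset NP -> dfact (n - t) <= c * #|A| ->
  0 < #|star A (kernel q A)| /\ spread_star t A (kernel q A).
Proof.
move=> AN A_large; rewrite /kernel; case: arg_maxnP; first by rewrite cards0.
move=> S Sq Smax.
have A_leq_wS : #|A| <= #|star A S| * n ^ #|S|.
  by have := Smax set0; rewrite star0 cards0 muln1; apply.
have cS : #|S| <= q - t.
  rewrite leqNgt; apply/negP => qt_lt_S.
  have := gap (s := #|S|); rewrite qt_lt_S Sq ltnNge => /(_ isT) /negP; apply.
  apply: leq_trans A_large _; rewrite leq_mul2l (leq_trans A_leq_wS) ?orbT //.
  by rewrite leq_mul2r card_star_leq ?orbT.
split.
  have := leq_trans (dfact_gt0 _) (leq_trans A_large (leq_mul (leqnn c) A_leq_wS)).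
  by rewrite !muln_gt0 => /and3P[].
move=> U; rewrite -setI_eq0 setIC => /eqP SU0 /andP[_ Ut].
have cSU : #|S :|: U| = #|S| + #|U| by rewrite cardsU SU0 cards0 subn0.
have := Smax (S :|: U); rewrite cSU expnD mulnA mulnAC /= leq_pmul2r ?expn_gt0 ?n_gt0 //.
by apply; rewrite -(subnK t_le_q) leq_add.
Qed.

Lemma kernel_meets A B :
  A \subset NP -> B \subset NP -> dfact (n - t) <= c * #|A| ->
  t_cross_intersecting t A B -> forall M', M' \in B -> t <= #|M' :&: kernel q A|.
Proof.
move=> AN BN A_large AB M' M'B; have [star_gt0 spread] := kernel_spec AN A_large.
apply: spread_star_meets (subsetP BN _ M'B) spread star_gt0 _ => M /setIdP[MA _].
exact: AB.
Qed.

Lemma card_cross_large A B :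
  A \subset NP -> B \subset NP -> dfact (n - t) <= c * #|A| ->
  t_cross_intersecting t A B -> #|B| <= 'C(q, t) * dfact (n - t).
Proof.
move=> AN BN A_large AB.
apply: leq_trans (card_cross_leq BN (kernel_meets AN BN A_large AB)) _.
by rewrite leq_mul2r leq_bin2l ?card_kernel_leq ?orbT.
Qed.

End Kernel.

Lemma small_family_bound t c F G :
  'C(n - 1, t) <= c -> F \subset NP -> G \subset NP -> t_cross_intersecting t F G ->
  c * #|F| < dfact (n - t) -> #|F| * #|G| <= dfact (n - t) ^ 2.
Proof.
move=> Cc FN GN FG F_small.
have [->|[M0 M0F]] := set_0Vmem F; first by rewrite cards0.
have G_le : #|G| <= c * dfact (n - t).
  apply: leq_trans (leq_mul Cc (leqnn _)); rewrite -(card_near_perfect (subsetP FN _ M0F)).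
  by apply: card_cross_leq => // M' M'G; rewrite setIC; apply: FG.
rewrite expnS expn1 (leq_trans (leq_mul (leqnn _) G_le)) //.
by rewrite mulnA [#|F| * c]mulnC leq_mul2r ltnW ?orbT.
Qed.

Section LargeFamilies.
Variables (t q c : nat) (F G : {set {set edge}}).
Hypotheses (t_lt_n : t < n) (t_le_q : t <= q) (gap : kernel_gap t q c).
Hypotheses (FN : F \subset NP) (GN : G \subset NP) (FG : t_cross_intersecting t F G).
Hypotheses (F_large : dfact (n - t) <= c * #|F|) (G_large : dfact (n - t) <= c * #|G|).

Local Notation D := (dfact (n - t)).
Local Notation D1 := (dfact (n - t.+1)).
Local Notation R := (2 * (n - t.+1)).+1.
Local Notation Q := 'C(q, t).

Let c_gt0 : 0 < c.
Proof. by have := leq_trans (dfact_gt0 _) F_large; rewrite muln_gt0 => /andP[]. Qed.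

Let D_split : D = D1 * R.
Proof. exact: dfact_subnS. Qed.

Let Ts := [set T : {set edge} | T \subset kernel q F & #|T| == t].
Let good T := c * #|F :\: star F T| < D.
Let goodset := [set T in Ts | good T].
Let K T := kernel q (F :\: star F T).
Let bad := \bigcup_(T in Ts | ~~ good T) \bigcup_(e in K T :\: T) star G (e |: T).

Lemma bad_kernel T :
  ~~ good T -> (forall M', M' \in G -> t <= #|M' :&: K T|) /\ ~~ (T \subset K T).
Proof.
move=> bT; have FTN : F :\: star F T \subset NP := subset_trans (subsetDl _ _) FN.
have FT_large : D <= c * #|F :\: star F T| by rewrite leqNgt.
have FTG : t_cross_intersecting t (F :\: star F T) G by move=> M M' /setDP[MF _]; apply: FG.
have [star_gt0 _] := kernel_spec t_le_q gap FTN FT_large.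
split; first exact: kernel_meets FTN GN FT_large FTG.
case/card_gt0P: star_gt0 => M /setIdP[/setDP[MF MT] KM].
by apply: contraNN MT => TK; rewrite inE MF (subset_trans TK KM).
Qed.

Lemma card_bad : #|bad| <= Q * q * D1.
Proof.
apply: leq_trans (card_bigcup_leq _ _) _.
apply: (@leq_trans (\sum_(T in Ts) q * D1)); last first.
  rewrite sum_nat_const mulnA leq_mul2r /Ts cards_draws leq_mul2r.
  by rewrite leq_bin2l ?card_kernel_leq ?orbT.
rewrite big_mkcondr /=; apply: leq_sum => T; rewrite inE => /andP[_ /eqP cT].
case: ifP => // bT.
apply: leq_trans (card_bigcup_leq _ _) _.
apply: (@leq_trans (\sum_(e in K T :\: T) D1)).
  apply: leq_sum => e /setDP[_ eT].
  by apply: leq_trans (card_star_leq _ GN) _; rewrite cardsU1 eT cT.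
rewrite sum_nat_const leq_mul2r.
by rewrite (leq_trans (subset_leq_card (subsetDl _ _)) (card_kernel_leq _ _)) orbT.
Qed.

Lemma good_or_bad M' : M' \in G -> (exists2 T, T \in goodset & T \subset M') \/ M' \in bad.
Proof.
move=> M'G.
have [T TS cT] := exists_subset_card (kernel_meets t_le_q gap FN GN F_large FG M'G).
have TTs : T \in Ts by rewrite inE cT eqxx andbT (subset_trans TS (subsetIr _ _)).
have TM' : T \subset M' := subset_trans TS (subsetIl _ _).
have [gT|bT] := boolP (good T); first by left; exists T; rewrite // inE TTs.
right; have [GK TK] := bad_kernel bT.
have [e /setIP[eM' eK] eT] := exists_setI_notin TK (leq_trans (eq_leq cT) (GK M' M'G)).
apply/bigcupP; exists T; first by rewrite TTs.
apply/bigcupP; exists e; first by rewrite inE eT eK.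
by rewrite inE M'G subUset sub1set eM' TM'.
Qed.

Lemma two_good_bound :
  Q * (c + 2 * R) <= c * R -> 1 < #|goodset| -> #|F| * #|G| <= D ^ 2.
Proof.
move=> ineq /card_gt1P[T1 [T2 [+ + T12]]].
rewrite !inE => /andP[/andP[_ /eqP cT1] good1] /andP[/andP[_ /eqP cT2] good2].
have cT12 : t < #|T1 :|: T2|.
  rewrite ltnNge; apply: contra T12 => le12; apply/eqP.
  have E1 : T1 == T1 :|: T2 :> {set edge} by rewrite eqEcard subsetUl cT1 le12.
  have E2 : T2 == T1 :|: T2 :> {set edge} by rewrite eqEcard subsetUr cT2 le12.
  by rewrite (eqP E1) {2}(eqP E2).
have F_cover : F \subset star F (T1 :|: T2) :|: (F :\: star F T1) :|: (F :\: star F T2).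
  apply/subsetP => M MF; rewrite !inE MF /= subUset.
  by case: (T1 \subset M); case: (T2 \subset M).
have F_le : c * #|F| <= c * D1 + 2 * (D1 * R).
  have star12 : #|star F (T1 :|: T2)| <= D1.
    exact: leq_trans (card_star_leq _ FN) (leq_dfact (leq_sub2l _ cT12)).
  apply: leq_trans (leq_mul (leqnn c) (subset_leq_card F_cover)) _.
  apply: leq_trans (leq_mul (leqnn c) (leq_trans (leq_card_setU _ _)
                      (leq_add (leq_card_setU _ _) (leqnn _)))) _.
  rewrite -D_split !mulnDr (_ : 2 * D = D + D); last by ring.
  by rewrite addnA !leq_add ?(ltnW good1) ?(ltnW good2) // leq_mul2l star12 orbT.
have G_le := card_cross_large t_le_q gap FN GN F_large FG.
rewrite D_split in G_le *; apply: (leq_mul_scaled c_gt0 F_le G_le).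
have -> : (c * D1 + 2 * (D1 * R)) * (Q * (D1 * R)) = Q * (c + 2 * R) * (D1 * D1 * R) by ring.
have -> : c * (D1 * R) ^ 2 = c * R * (D1 * D1 * R) by ring.
by rewrite leq_mul2r ineq orbT.
Qed.

Lemma card_F_good T : good T -> c * #|F| <= c * #|star F T| + D.
Proof.
move=> goodT; apply: leq_trans (leq_add (leqnn _) (ltnW goodT)).
rewrite -mulnDr leq_mul2l; apply/orP; right.
apply: leq_trans (leq_card_setU _ _); apply/subset_leq_card/subsetP => M MF.
by rewrite !inE MF; case: (T \subset M).
Qed.

Lemma card_G_one_good T : goodset = [set T] -> #|G| <= #|star G T| + Q * q * D1.
Proof.
move=> goodE; apply: leq_trans (leq_add (leqnn _) card_bad).
apply: leq_trans (leq_card_setU _ _); apply/subset_leq_card/subsetP => M' M'G.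
case: (good_or_bad M'G) => [[T']|M'bad]; last by rewrite inE M'bad orbT.
by rewrite goodE inE => /eqP -> TM'; rewrite !inE M'G TM'.
Qed.

Lemma one_good_spec T : goodset = [set T] -> #|T| = t /\ good T.
Proof.
move=> goodE; have : T \in goodset by rewrite goodE set11.
by rewrite !inE => /andP[/andP[_ /eqP]].
Qed.

Lemma one_good_F_avoid T M :
  (c + 1) * (n - 1 + Q * q) <= c * R ->
  goodset = [set T] -> M \in F -> ~~ (T \subset M) -> #|F| * #|G| <= D ^ 2.
Proof.
move=> ineq goodE MF TM; have [cT goodT] := one_good_spec goodE.
have F_le := card_F_good goodT; have G_le := card_G_one_good goodE.
have starF : #|star F T| <= D by rewrite -cT card_star_leq.
have starG : #|star G T| <= (n - 1) * D1.
  rewrite -cT; apply: card_star_avoid GN (subsetP FN _ MF) TM _ => M' /setIdP[M'G _].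
  by rewrite cT setIC FG.
rewrite D_split in F_le starF *.
apply: (@leq_mul_scaled _ _ _ ((c + 1) * (D1 * R)) ((n - 1 + Q * q) * D1) _ c_gt0).
- by apply: leq_trans F_le _; rewrite mulnDl mul1n leq_add2r leq_mul2l starF orbT.
- by apply: leq_trans G_le _; rewrite mulnDl leq_add2r starG.
have -> : (c + 1) * (D1 * R) * ((n - 1 + Q * q) * D1)
        = (c + 1) * (n - 1 + Q * q) * (D1 * R * D1) by ring.
have -> : c * (D1 * R) ^ 2 = c * R * (D1 * R * D1) by ring.
by rewrite leq_mul2r ineq orbT.
Qed.

Lemma one_good_G_avoid T M' :
  (c * (n - 1) + R) * (R + Q * q) <= c * R * R ->
  goodset = [set T] -> M' \in G -> ~~ (T \subset M') -> #|F| * #|G| <= D ^ 2.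
Proof.
move=> ineq goodE M'G TM'; have [cT goodT] := one_good_spec goodE.
have F_le := card_F_good goodT; have G_le := card_G_one_good goodE.
have starG : #|star G T| <= D by rewrite -cT card_star_leq.
have starF : #|star F T| <= (n - 1) * D1.
  rewrite -cT; apply: card_star_avoid FN (subsetP GN _ M'G) TM' _ => M /setIdP[MF _].
  by rewrite cT FG.
rewrite D_split in F_le starG *.
apply: (@leq_mul_scaled _ _ _ ((c * (n - 1) + R) * D1) ((R + Q * q) * D1) _ c_gt0).
- apply: leq_trans F_le _; rewrite mulnDl -mulnA [R * D1]mulnC leq_add2r.
  by rewrite leq_mul2l starF orbT.
- by apply: leq_trans G_le _; rewrite mulnDl leq_add2r [R * D1]mulnC starG.
have -> : (c * (n - 1) + R) * D1 * ((R + Q * q) * D1)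
        = (c * (n - 1) + R) * (R + Q * q) * (D1 * D1) by ring.
have -> : c * (D1 * R) ^ 2 = c * R * R * (D1 * D1) by ring.
by rewrite leq_mul2r ineq orbT.
Qed.

Lemma one_good_bound :
  (c + 1) * (n - 1 + Q * q) <= c * R ->
  (c * (n - 1) + R) * (R + Q * q) <= c * R * R ->
  #|goodset| = 1 -> #|F| * #|G| <= D ^ 2.
Proof.
move=> ineqF ineqG /eqP/cards1P[T goodE]; have [cT _] := one_good_spec goodE.
have [/exists_inP[M MF TM]|allF] := boolP [exists M in F, ~~ (T \subset M)].
  exact: one_good_F_avoid goodE MF TM.
have [/exists_inP[M' M'G TM']|allG] := boolP [exists M' in G, ~~ (T \subset M')].
  exact: one_good_G_avoid goodE M'G TM'.
have in_star A : A \subset NP -> ~~ [exists M in A, ~~ (T \subset M)] -> #|A| <= D.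
  move=> AN allA; apply: (@leq_trans #|star A T|); last by rewrite -cT card_star_leq.
  apply/subset_leq_card/subsetP => M MA; rewrite inE MA /=.
  by apply: contraR allA => TM; apply/exists_inP; exists M.
by rewrite expnS expn1 leq_mul ?in_star.
Qed.

Lemma no_good_bound : Q * Q * q <= R -> goodset = set0 -> #|F| * #|G| <= D ^ 2.
Proof.
move=> ineq good0.
have G_le : #|G| <= Q * q * D1.
  apply: leq_trans card_bad; apply/subset_leq_card/subsetP => M' M'G.
  by case: (good_or_bad M'G) => // -[T]; rewrite good0 inE.
have F_le := card_cross_large t_le_q gap GN FN G_large (t_cross_intersectingC FG).
apply: leq_trans (leq_mul F_le G_le) _; rewrite D_split.
have -> : Q * (D1 * R) * (Q * q * D1) = Q * Q * q * (D1 * D1 * R) by ring.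
have -> : (D1 * R) ^ 2 = R * (D1 * D1 * R) by ring.
by rewrite leq_mul2r ineq orbT.
Qed.

Lemma large_families_bound :
  Q * (c + 2 * R) <= c * R -> Q * Q * q <= R ->
  (c + 1) * (n - 1 + Q * q) <= c * R ->
  (c * (n - 1) + R) * (R + Q * q) <= c * R * R ->
  #|F| * #|G| <= D ^ 2.
Proof.
move=> ineq2 ineq0 ineqF ineqG.
have [two|] := ltnP 1 #|goodset|; first exact: two_good_bound.
rewrite leq_eqVlt ltnS leqn0 cards_eq0 => /orP[/eqP one|/eqP none].
  exact: one_good_bound.
exact: no_good_bound.
Qed.

End LargeFamilies.
End NearPerfectMatchings.

Lemma leq_exp_exp2 d L : 0 < d -> L ^ d <= d ^ d * 2 ^ L.
Proof.
move=> d_gt0; set M := L %/ d.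
have L_le : L <= d * M.+1 by rewrite mulnC ltnW // ltn_ceil.
apply: leq_trans (_ : (d * M.+1) ^ d <= _); first by rewrite leq_exp2r.
rewrite expnMn leq_mul2l; apply/orP; right.
apply: leq_trans (_ : (2 ^ M) ^ d <= _); first by rewrite leq_exp2r // ltn_expl.
by rewrite -expnM leq_exp2l // leq_divM.
Qed.

Lemma poly_leq_exp2 B d : exists L0, forall L, L0 <= L -> B * L.+1 ^ d <= 2 ^ L.
Proof.
exists (2 * B * d.+1 ^ d.+1) => L L0_le.
have := leq_exp_exp2 L.+1 (ltn0Sn d); rewrite expnS (expnS 2) => pow_le.
rewrite -(leq_pmul2l (ltn0Sn L)) mulnCA.
apply: leq_trans (leq_mul (leqnn B) pow_le) _.
rewrite mulnA mulnCA mulnA; apply: leq_mul => //.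
by rewrite mulnA; apply: leqW.
Qed.

Lemma exists_log_scale t : exists n0, forall n, n0 <= n -> exists j,
  [/\ 0 < j, 10 * n ^ (2 * t + 1) < 2 ^ j & 26 * (2 * t + 2 * j) ^ (2 * t + 1) + 20 * t + 4 <= n].
Proof.
set d := 2 * t + 1; set a := 6 * t + 10.
have [L0 L0P] := poly_leq_exp2 (26 * a ^ d + 20 * t + 4) d.
exists (2 ^ L0) => n n_ge; set L := trunc_log 2 n.
have n_gt0 : 0 < n by apply: leq_trans n_ge; rewrite expn_gt0.
have L_le : 2 ^ L <= n by apply: trunc_logP.
have n_lt : n < 2 ^ L.+1 by apply: trunc_log_ltn.
exists (4 + d * L.+1); split=> //.
  have : n ^ d < (2 ^ L.+1) ^ d by rewrite ltn_exp2r // /d addn1.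
  by rewrite expnD -expnM mulnC; lia.
apply: leq_trans L_le; apply: leq_trans (L0P L (trunc_log_max (isT : 1 < 2) n_ge)).
have q_le : 2 * t + 2 * (4 + d * L.+1) <= a * L.+1 by rewrite /a /d; nia.
have qd_le := leq_exp2rW d q_le; rewrite expnMn in qd_le.
have : 1 <= L.+1 ^ d by rewrite expn_gt0.
set u := L.+1 ^ d in qd_le *; nia.
Qed.

Lemma leq_exp2_exp3 m j : 2 * j <= m -> 2 ^ m * 2 ^ j <= 3 ^ m.
Proof.
move=> jm; rewrite -(subnK jm) expnD -mulnA [3 ^ _]expnD leq_mul ?leq_exp2rW //.
rewrite -expnD (_ : 2 * j + j = 3 * j); last by lia.
by rewrite !expnM leq_exp2rW.
Qed.

Lemma kernel_gap_log n t j :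
  4 * (2 * t + 2 * j) <= n -> 10 * n ^ (2 * t + 1) < 2 ^ j ->
  kernel_gap n t (2 * t + 2 * j) (10 * n ^ (t + 1)).
Proof.
move=> n_ge j_gt s /andP[s_gt s_le]; set m := s - t.
have sE : s = t + m by rewrite /m; lia.
have mj : 2 * j <= m by rewrite /m; lia.
have dfact_le := leq_dfactD (n - s) m; rewrite (_ : n - s + m = n - t) in dfact_le; last by lia.
set X := 2 * (n - s) + 1 in dfact_le.
have X_ge : 3 * n <= 2 * X by rewrite /X; lia.
rewrite -(ltn_pmul2r (expn_gt0 3 m)).
have -> : 10 * n ^ (t + 1) * (dfact (n - s) * n ^ s) * 3 ^ m
          = 10 * n ^ (2 * t + 1) * dfact (n - s) * (3 * n) ^ m.
  have -> : n ^ (2 * t + 1) = n ^ t * n ^ t * n by rewrite mul2n -addnn !expnD expn1.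
  by rewrite sE expnMn !expnD expn1; lia.
apply: (@leq_ltn_trans (10 * n ^ (2 * t + 1) * 2 ^ m * dfact (n - t))).
  apply: (@leq_trans (10 * n ^ (2 * t + 1) * dfact (n - s) * (2 ^ m * X ^ m))).
    by rewrite leq_mul2l -expnMn leq_exp2rW // orbT.
  rewrite (_ : 10 * _ * _ * _ = 10 * n ^ (2 * t + 1) * 2 ^ m * (dfact (n - s) * X ^ m)).
    by rewrite leq_mul2l dfact_le orbT.
  by lia.
rewrite mulnC ltn_pmul2l ?dfact_gt0 //.
apply: leq_trans (leq_exp2_exp3 mj); rewrite [_ * 2 ^ j]mulnC ltn_pmul2r ?expn_gt0 //.
Qed.

Lemma parameter_ineqs n t q :
  0 < q -> t <= q -> 26 * q ^ (2 * t + 1) + 20 * t + 4 <= n ->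
  let c := 10 * n ^ (t + 1) in let R := (2 * (n - t.+1)).+1 in let Q := 'C(q, t) in
  [/\ 'C(n - 1, t) <= c, Q * (c + 2 * R) <= c * R, Q * Q * q <= R,
      (c + 1) * (n - 1 + Q * q) <= c * R & (c * (n - 1) + R) * (R + Q * q) <= c * R * R].
Proof.
move=> q_gt0 t_le_q n_ge c R Q; set P := q ^ (2 * t + 1) in n_ge.
have Q_le : Q <= q ^ t := bin_leq_exp q t.
have QP : Q <= P by apply: leq_trans Q_le _; rewrite leq_pexp2l //; lia.
have QqP : Q * q <= P.
  by apply: leq_trans (leq_mul Q_le (leqnn q)) _; rewrite -expnSr leq_pexp2l //; lia.
have QQqP : Q * Q * q <= P.
  apply: leq_trans (leq_mul (leq_mul Q_le Q_le) (leqnn q)) _.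
  by rewrite -expnD -expnSr (_ : (t + t).+1 = 2 * t + 1) //; lia.
have n_gt0 : 0 < n by lia.
have n_le : n <= n ^ (t + 1) by rewrite -{1}(expn1 n) leq_pexp2l // addn1.
have Cc : 'C(n - 1, t) <= c.
  apply: leq_trans (bin_leq_exp _ _) _; apply: leq_trans _ (leq_pmull _ _) => //.
  by apply: leq_trans (_ : n ^ t <= _); rewrite ?leq_exp2rW ?leq_pexp2l ?addn1 //; lia.
have c_ge : 10 * n <= c by rewrite /c leq_mul2l n_le orbT.
have R_eq : R = 2 * n - 2 * t - 1 by rewrite /R; lia.
have tn : 4 * t + 2 <= n by lia.
clearbody c R Q; split=> //.
- have : 2 * Q <= R by lia.
  have : 2 * R <= c by lia.
  clear; nia.
- by lia.
- have : 11 * (Q * q) + 20 * t + 1 <= 9 * n by lia.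
  have : 10 <= c by lia.
  clear -R_eq tn; nia.
- have : 2 * (Q * q) <= n by lia.
  have : 2 * n <= c by lia.
  clear -R_eq tn; nia.
Qed.

Lemma parameters_exist t : exists n0, forall n, n0 <= n -> exists q,
  let c := 10 * n ^ (t + 1) in let R := (2 * (n - t.+1)).+1 in let Q := 'C(q, t) in
  [/\ t < n, t <= q, kernel_gap n t q c, 'C(n - 1, t) <= c &
      [/\ Q * (c + 2 * R) <= c * R, Q * Q * q <= R,
          (c + 1) * (n - 1 + Q * q) <= c * R & (c * (n - 1) + R) * (R + Q * q) <= c * R * R]].
Proof.
have [n0 n0P] := exists_log_scale t; exists n0 => n /n0P[j [j_gt0 j_gt n_ge]].
exists (2 * t + 2 * j) => c R Q.
have q_le : 2 * t + 2 * j <= (2 * t + 2 * j) ^ (2 * t + 1).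
  by rewrite -{1}(expn1 (2 * t + 2 * j)) leq_pexp2l ?addn1 //; lia.
have [|||Cc ineq2 ineq0 ineqF ineqG] := @parameter_ineqs n t (2 * t + 2 * j); try lia.
split=> //; try lia.
by apply: kernel_gap_log => //; lia.
Qed.

Theorem mainTheorem11 (t : nat) :
  exists n0 : nat, forall n : nat, n0 <= n ->
    forall F G : {set {set {set 'I_(2 * n - 1)}}},
      F \subset near_perfect_matchings n ->
      G \subset near_perfect_matchings n ->
      t_cross_intersecting t F G ->
      #|F| * #|G| <= (dfact (n - t)) ^ 2.
Proof.
have [n0 n0P] := parameters_exist t; exists n0 => n /n0P[q].
move=> [t_lt_n t_le_q gap Cc [ineq2 ineq0 ineqF ineqG]] F G FN GN FG.
have n_gt0 : 0 < n by apply: leq_ltn_trans t_lt_n.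
set c := 10 * n ^ (t + 1) in gap Cc ineq2 ineq0 ineqF ineqG.
have [F_small|F_large] := ltnP (c * #|F|) (dfact (n - t)).
  exact: small_family_bound Cc FN GN FG F_small.
have [G_small|G_large] := ltnP (c * #|G|) (dfact (n - t)).
  by rewrite mulnC; apply: small_family_bound Cc GN FN (t_cross_intersectingC FG) G_small.
exact: large_families_bound t_lt_n t_le_q gap FN GN FG F_large G_large ineq2 ineq0 ineqF ineqG.
Qed.
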